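(* Let $d\ge1$, $N=2^d$, $Q\ge 1$, and let $\Omega=\{(x,y,m):0\le x\le 1,\ 0<m\le y\le Qm\}$. Let $B:\Omega\to\mathbb{R}$ satisfy \[ B(x,y,m)\ge \frac1N\sum_{i=1}^N B(x_i,y_i,m_i) \] whenever $(x,y,m)\in\Omega$, $(x_i,y_i,m_i)\in\Omega$ for $i=1,\dots,N$, $\frac1N\sum x_i=x$, $\frac1N\sum y_i=y$ and $\min_i m_i=m$. Then $B$ is decreasing in $m$: if $(x,y,m_1),(x,y,m_2)\in\Omega$ with $m_1\le m_2$, then $B(x,y,m_1)\ge B(x,y,m_2)$. *)

From mathcomp Require Import all_boot all_order all_algebra.
From mathcomp Require Import reals.
Set Implicit Arguments. Unset Strict Implicit. Unset Printing Implicit Defensive.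
Import Order.TTheory GRing.Theory Num.Theory.
Local Open Scope ring_scope.

Definition inOmega (R : realType) (Q x y m : R) : Prop :=
  0 <= x /\ x <= 1 /\ 0 < m /\ m <= y /\ y <= Q * m.

Definition is_min_fam (R : realType) (N : nat) (ms : 'I_N -> R) (m : R) : Prop :=
  (forall i, m <= ms i) /\ (exists i, ms i = m).

From mathcomp Require Import all_boot all_order all_algebra.
From mathcomp Require Import reals.
Import Order.TTheory GRing.Theory Num.Theory.
Local Open Scope ring_scope.

(* Split the point (x, y, m1) into N copies of (x, y, m2) except one copy of
   (x, y, m1): the averages of x and y are unchanged and the minimum is m1, so
   the hypothesis gives (B(m1) + (N - 1) B(m2)) / N <= B(m1), i.e. B(m2) <= B(m1)
   as soon as N >= 2. *)

Section Averages.
Context {R : numFieldType} {N : nat}.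

Lemma mean_const (c : R) : (0 < N)%N -> N%:R^-1 * \sum_(i < N) c = c.
Proof.
move=> N_gt0; rewrite sumr_const card_ord -[c *+ N]mulr_natl mulrA mulVf ?mul1r //.
by rewrite pnatr_eq0 -lt0n.
Qed.

Lemma sum_update_const (i0 : 'I_N) (a b : R) :
  \sum_(i < N) (if i == i0 then a else b) = a + b *+ N.-1.
Proof.
rewrite (bigD1 i0) //= eqxx; congr (_ + _).
rewrite (eq_bigr (fun=> b)) => [|i /negbTE ->//].
by rewrite sumr_const cardC1 card_ord.
Qed.

Lemma le_of_mean_update_le (i0 : 'I_N) (a b : R) : (1 < N)%N ->
  N%:R^-1 * \sum_(i < N) (if i == i0 then a else b) <= a -> b <= a.
Proof.
move=> N_gt1; have N_gt0 : (0 < N)%N by apply: ltnW.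
have NR_gt0 : 0 < N%:R :> R by rewrite ltr0n.
rewrite sum_update_const -(ler_pM2l NR_gt0) mulrA mulfV ?gt_eqF // mul1r.
have -> : N%:R * a = a + a *+ N.-1 by rewrite addrC -mulrSr prednK // mulr_natl.
have N1_neq0 : N.-1 != 0%N by rewrite -lt0n -ltnS prednK.
by rewrite lerD2l lerMn2r (negbTE N1_neq0).
Qed.

End Averages.

Theorem mainTheorem4 (R : realType) (d : nat) (Q : R) (B : R -> R -> R -> R) :
  (1 <= d)%N -> 1 <= Q ->
  (forall (x y m : R) (xs ys ms : 'I_(2 ^ d) -> R),
      inOmega Q x y m ->
      (forall i, inOmega Q (xs i) (ys i) (ms i)) ->
      (2 ^ d)%:R^-1 * \sum_(i < 2 ^ d) xs i = x ->
      (2 ^ d)%:R^-1 * \sum_(i < 2 ^ d) ys i = y ->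
      is_min_fam ms m ->
      (2 ^ d)%:R^-1 * \sum_(i < 2 ^ d) B (xs i) (ys i) (ms i) <= B x y m) ->
  forall x y m1 m2 : R,
    inOmega Q x y m1 -> inOmega Q x y m2 -> m1 <= m2 ->
    B x y m2 <= B x y m1.
Proof.
move=> d_ge1 _ concave x y m1 m2 Om1 Om2 le_m12.
have N_gt1 : (1 < 2 ^ d)%N by rewrite -{1}(expn0 2) ltn_exp2l.
have N_gt0 : (0 < 2 ^ d)%N by apply: ltnW.
pose i0 : 'I_(2 ^ d) := Ordinal N_gt0.
pose ms i := if i == i0 then m1 else m2.
have Oms i : inOmega Q x y (ms i) by rewrite /ms; case: ifP.
have min_ms : is_min_fam ms m1.
  by split; [move=> i; rewrite /ms; case: ifP | exists i0; rewrite /ms eqxx].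
apply: (le_of_mean_update_le i0 (B x y m1) (B x y m2) N_gt1).
have := concave x y m1 (fun=> x) (fun=> y) ms Om1 Oms
  (mean_const x N_gt0) (mean_const y N_gt0) min_ms.
by under eq_bigr => i _ do rewrite [B _ _ _]fun_if.
Qed.
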